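(* Let $b$ be a Blaschke product with zeros $(a_n)_{n\ge1}$ (with multiplicity), $\Omega$ an approach region at $1$ and $m\ge0$ an integer, and assume $\sup_{z\in\Omega}\sum_n\frac{1-|a_n|^2}{|1-\overline{a_n}z|^{2m+2}}<\infty$. For integers $0\le k,l\le m$ and $z\in\Omega\cup\{1\}$ define the sequence $A_{k,l,z}=(A_{k,l,z}(n))_{n\ge1}$ by \[A_{k,l,z}(n)=\frac{1-|a_n|^2}{(1-\overline{a_n}z)^{1+k}(1-a_n\overline{z})^{1+l}}.\] Then for $k+l<2m$, $\lim_{z\to1,\,z\in\Omega}\|A_{k,l,z}-A_{k,l,1}\|_{\ell^1}=0$.
   Context: $\|x\|_{\ell^1}=\sum_n|x(n)|$. An approach region at $1$ is an open simply connected $\Omega\subset\mathbb{D}$ (unit disk) with $\partial\Omega\cap\mathbb{T}=\{1\}$ such that for $z\in\Omega$ close to $1$ the segment $[z,1]\subset\Omega$. *)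

From mathcomp Require Import all_boot all_order all_algebra.
From mathcomp Require Import all_classical all_reals all_analysis.
From mathcomp Require Import complex.
Import Order.TTheory GRing.Theory Num.Theory.
Import numFieldTopology.Exports numFieldNormedType.Exports.

Set Implicit Arguments.
Unset Strict Implicit.
Unset Printing Implicit Defensive.

Local Open Scope ring_scope.
Local Open Scope classical_set_scope.

Definition Cx (R : realType) : numClosedFieldType := R[i].

Definition cabs (R : realType) (z : Cx R) : R := Normc.normc z.

Definition rC (R : realType) (t : R) : Cx R := (t%:C)%C.

Definition unit_disk (R : realType) : set (Cx R) := [set z | `|z| < 1].

Definition unit_circle (R : realType) : set (Cx R) := [set z | `|z| = 1].

Definition boundary (R : realType) (A : set (Cx R)) : set (Cx R) :=
  closure A `\` interior A.

Definition simply_connected (R : realType) (U : set (Cx R)) : Prop :=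
  connected U /\
  forall gamma : R -> Cx R,
    {within `[0, 1]%classic, continuous gamma} ->
    gamma @` `[0, 1]%classic `<=` U ->
    gamma 0 = gamma 1 ->
    exists H : R * R -> Cx R,
      [/\ {within `[0, 1]%classic `*` `[0, 1]%classic, continuous H},
          H @` (`[0, 1]%classic `*` `[0, 1]%classic) `<=` U,
          (forall t, 0 <= t <= 1 -> H (0, t) = gamma t /\ H (1, t) = gamma 0) &
          (forall s, 0 <= s <= 1 -> H (s, 0) = gamma 0 /\ H (s, 1) = gamma 0)].

(* Approach region at 1. The segment [z,1] is read as the half-open
   segment [z,1) since 1 never lies in Omega (Omega is inside D). *)
Definition approach_region (R : realType) (Omega : set (Cx R)) : Prop :=
  [/\ open Omega,
      simply_connected Omega,
      Omega `<=` @unit_disk R,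
      boundary Omega `&` @unit_circle R = [set 1] &
      exists2 delta : R, 0 < delta &
        forall z, Omega z -> cabs (z - 1) < delta ->
          forall t : R, 0 <= t < 1 -> Omega (rC (1 - t) * z + rC t)].

(* (a_n) is the zero sequence (with multiplicity) of a Blaschke product:
   points of D satisfying the Blaschke condition sum (1 - |a_n|) < oo. *)
Definition blaschke_zeros (R : realType) (a : nat -> Cx R) : Prop :=
  (forall n, `|a n| < 1) /\
  (\sum_(0 <= n <oo) ((1 - cabs (a n))%:E) < +oo)%E.

Definition Aseq (R : realType) (a : nat -> Cx R) (k l : nat) (z : Cx R)
  (n : nat) : Cx R :=
  (1 - `|a n| ^+ 2) /
  ((1 - (a n)^* * z) ^+ k.+1 * (1 - a n * z^*) ^+ l.+1).

Definition ell1 (R : realType) (x : nat -> Cx R) : \bar R :=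
  (\sum_(0 <= n <oo) (cabs (x n))%:E)%E.

From mathcomp Require Import all_boot all_order all_algebra.
From mathcomp Require Import all_classical all_reals all_analysis.
From mathcomp Require Import complex.
From mathcomp Require Import ring lra.
Import Order.TTheory GRing.Theory Num.Theory.
Import numFieldTopology.Exports numFieldNormedType.Exports.

Set Implicit Arguments.
Unset Strict Implicit.
Unset Printing Implicit Defensive.

Local Open Scope ring_scope.
Local Open Scope classical_set_scope.

(* Write w_n = 1 - |a_n|^2 and x_n(z) = 1 / |1 - conj(a_n) z|, so that
   |A_{k,l,z}(n)| = w_n x_n(z)^p with p = k + l + 2 < q = 2m + 2.  From
   x^p <= K^p + x^q / K, the tail sum_{n >= N} |A_{k,l,z}(n)| is at most
   K^p sum_{n >= N} w_n + M / K uniformly on Omega; this is small for K large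
   and then N large, because sum w_n <= 2 sum (1 - |a_n|) < oo.  The bound
   passes to z = 1, a point of the closure of Omega, by continuity of the
   finite tails, and the finitely many remaining terms converge one by one. *)

Section ComplexModulus.
Variable R : realType.
Implicit Types x y : Cx R.

Lemma normcE x : `|x| = ((cabs x)%:C)%C.
Proof. by []. Qed.

Lemma cabs_ge0 x : 0 <= cabs x.
Proof. by rewrite /cabs /Normc.normc; case: x => ? ?; exact: sqrtr_ge0. Qed.

Lemma cabs0 : cabs (0 : Cx R) = 0.
Proof. by apply: complexI; rewrite -normcE normr0. Qed.

Lemma cabs_lt1 x : `|x| < 1 -> cabs x < 1.
Proof. by rewrite normcE ltcR. Qed.

Lemma ler_cabsB x y : cabs (x - y) <= cabs x + cabs y.
Proof. by rewrite -lecR rmorphD /= -!normcE ler_normB. Qed.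

Lemma normcR (r : R) : `|(r%:C)%C| = (`|r|%:C)%C :> Cx R.
Proof. by rewrite normc_def /= expr0n addr0 sqrtr_sqr. Qed.

Lemma cvg_cabs (T : Type) (F : set_system T) {FF : Filter F} (f : T -> Cx R)
    (c : Cx R) :
  f @ F --> c -> cabs (f t) @[t --> F] --> cabs c.
Proof.
move=> fc; apply/cvgrPdist_lt => e e0.
have e0' : 0 < (e%:C)%C :> Cx R by rewrite ltcR.
move/cvgrPdist_lt: fc => /(_ _ e0'); apply: filterS => t.
rewrite -ltcR -normcR rmorphB /= -!normcE.
exact/le_lt_trans/ler_dist_dist.
Qed.

End ComplexModulus.

(* Typeclass search does not find this instance on its own. *)
#[local] Instance nbhs_numClosedField_filter (C : numClosedFieldType) (z : C) :
  ProperFilter (nbhs z) := nbhs_pfilter z.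

Section NumClosedFieldContinuity.
Variable C : numClosedFieldType.

Lemma conjC_continuous : continuous (fun z : C => z^*).
Proof.
move=> w; apply/cvgrPdist_lt => e e0; near=> z.
rewrite -rmorphB norm_conjC; near: z.
by apply: cvgr_dist_lt; [exact: cvg_id|].
Unshelve. all: by end_near.
Qed.

Lemma conjC_1_subM (u z : C) : 1 - u * z^* = (1 - u^* * z)^*.
Proof. by rewrite rmorphB rmorph1 rmorphM /= conjCK. Qed.

Lemma cvgXn (T : Type) (F : set_system T) {FF : Filter F} (f : T -> C) (c : C)
    n :
  f @ F --> c -> f t ^+ n @[t --> F] --> c ^+ n.
Proof.
move=> fc; elim: n => [|n IH].
  by under eq_fun do rewrite expr0; exact: cvg_cst.
by under eq_fun do rewrite exprS; rewrite exprS; exact: cvgM.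
Qed.

End NumClosedFieldContinuity.

Lemma cvg_sum_seq (R : numFieldType) (V : normedModType R) (I T : Type)
    (F : set_system T) {FF : Filter F} (r : seq I) (f : I -> T -> V)
    (c : I -> V) :
  (forall i, f i @ F --> c i) ->
  \sum_(i <- r) f i t @[t --> F] --> \sum_(i <- r) c i.
Proof.
move=> fc; elim: r => [|i r IH].
  by under eq_fun do rewrite big_nil; rewrite big_nil; exact: cvg_cst.
by under eq_fun do rewrite big_cons; rewrite big_cons; exact: cvgD.
Qed.

Lemma ler_closure (T : topologicalType) (R : realType) (S : set T) (c : T)
    (h : T -> R) (e : R) :
  closure S c -> h t @[t --> c] --> h c -> (forall t, S t -> h t <= e) ->
  h c <= e.
Proof.
move=> Sc hc hS.
have ? : ProperFilter (within S (nbhs c)) by exact: within_nbhs_proper.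
have hcS : h t @[t --> within S (nbhs c)] --> h c by exact: cvg_within_filter.
have hSe : \forall t \near within S (nbhs c), h t <= e.
  by apply: filterS (withinT S (nbhs_filter c)); exact: hS.
exact: (closed_cvg _ (@closed_le _ e) hSe _ hcS).
Qed.

Lemma nonneg_cvge0 (R : realType) (T : Type) (F : set_system T) {FF : Filter F}
    (f : T -> \bar R) :
  (forall t, (0 <= f t)%E) ->
  (forall e : R, 0 < e -> \forall t \near F, (f t <= e%:E)%E) ->
  f @ F --> 0%E.
Proof.
move=> f0 fe; have fin : \forall t \near F, f t \is a fin_num.
  apply: filterS (fe 1 ltr01) => t /le_lt_trans/(_ (ltry _)).
  by rewrite ge0_fin_numE.
apply/fine_cvgP; split=> //; apply/cvgr0Pnorm_le => e e0.
apply: filterS (filterI fin (fe e e0)) => t [ft fte] /=.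
by rewrite ger0_norm ?fine_ge0 // -lee_fin fineK.
Qed.

Lemma exprn_le_cutoff (R : realFieldType) (x K : R) (p q : nat) :
  0 <= x -> 1 <= K -> (p < q)%N -> x ^+ p <= K ^+ p + x ^+ q / K.
Proof.
move=> x0 K1 pq; have K0 : 0 < K by exact: lt_le_trans K1.
have [xK|Kx] := leP x K.
  apply: ler_wpDr; first by rewrite divr_ge0 ?exprn_ge0 // ltW.
  by apply: lerXn2r; rewrite // nnegrE ltW.
apply: ler_wpDl; first by rewrite exprn_ge0 ?ltW.
rewrite ler_pdivlMr // -(subnKC (ltnW pq)) exprD.
rewrite ler_wpM2l ?exprn_ge0 //; apply: le_trans (ltW Kx) _.
by rewrite ler_eXnr ?subn_gt0 // (le_trans K1 (ltW Kx)).
Qed.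

Definition small_tails {R : realType} (u : nat -> R) :=
  forall e, 0 < e -> exists N, forall j, \sum_(N <= n < N + j) u n <= e.

Lemma nneseries_small_tails (R : realType) (u : nat -> R) :
  (forall n, 0 <= u n) -> (\sum_(0 <= n <oo) (u n)%:E < +oo)%E ->
  small_tails u.
Proof.
move=> u0 fin e e0.
have := nneseries_tail_cvg fin (fun n _ => (u0 n : (0 <= (u n)%:E)%E)).
move/fine_cvgP => [fintail /cvgr0Pnorm_le /(_ _ e0) small].
have [N _ /(_ N (leqnn N)) [finN leN]] := filterI fintail small.
exists N => j; apply: le_trans (le_trans (ler_norm _) leN).
rewrite -lee_fin fineK // -sumEFin; apply: nneseries_lim_ge => n _ _.
by rewrite lee_fin.
Qed.

Lemma small_tails_le (R : realType) (u v : nat -> R) (c : R) :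
  0 < c -> (forall n, u n <= c * v n) -> small_tails v -> small_tails u.
Proof.
move=> c0 uv vt e e0; have [N hN] := vt (e / c) (divr_gt0 e0 c0).
exists N => j; apply: le_trans (ler_sum _ (fun n _ => uv n)) _.
by rewrite -mulr_sumr -ler_pdivlMl // mulrC.
Qed.

Section UniformTails.
Variables (R : realType) (T : Type) (S : set T).
Variables (w : nat -> R) (x : T -> nat -> R) (M : R) (p q : nat).
Hypotheses (w_ge0 : forall n, 0 <= w n) (x_ge0 : forall z n, 0 <= x z n).
Hypotheses (w_tails : small_tails w) (ltpq : (p < q)%N).
Hypothesis bounded_q :
  forall z, S z -> forall N, \sum_(0 <= n < N) w n * x z n ^+ q <= M.

Lemma uniform_small_tails e : 0 < e ->
  exists N, forall z, S z -> forall j,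
    \sum_(N <= n < N + j) w n * x z n ^+ p <= e.
Proof.
move=> e0; set K := 1 + 2 * `|M| / e.
have K1 : 1 <= K by rewrite lerDl divr_ge0 ?mulr_ge0 // ltW.
have K0 : 0 < K by exact: lt_le_trans K1.
have eK0 : 0 < e / (2 * K ^+ p) by rewrite divr_gt0 ?mulr_gt0 ?exprn_gt0.
have [N wN] := w_tails eK0.
exists N => z Sz j.
have tail_q : \sum_(N <= n < N + j) w n * x z n ^+ q <= `|M|.
  apply: le_trans _ (le_trans (bounded_q Sz (N + j)) (ler_norm M)).
  rewrite (big_cat_nat (leq0n N) (leq_addr j N)) /= lerDr.
  by apply: sumr_ge0 => n _; rewrite mulr_ge0 ?exprn_ge0.
apply: (@le_trans _ _ (\sum_(N <= n < N + j)
    (K ^+ p * w n + (w n * x z n ^+ q) / K))).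
  apply: ler_sum => n _; rewrite [K ^+ p * _]mulrC -mulrA -mulrDr.
  by rewrite ler_wpM2l // exprn_le_cutoff.
rewrite big_split /= -mulr_sumr -mulr_suml [e]splitr; apply: lerD.
  apply: le_trans (ler_wpM2l (exprn_ge0 p (ltW K0)) (wN j)) _.
  rewrite le_eqVlt; apply/orP; left; apply/eqP.
  by field; rewrite expf_neq0 ?lt0r_neq0.
rewrite ler_pdivrMr //; apply: le_trans tail_q _.
have -> : e / 2 * K = e / 2 + `|M| by rewrite /K; field; exact: lt0r_neq0.
by rewrite lerDr divr_ge0 // ltW.
Qed.

End UniformTails.

Lemma ell1_le (R : realType) (f : nat -> Cx R) (c : R) :
  (forall N, \sum_(0 <= n < N) cabs (f n) <= c) -> (ell1 f <= c%:E)%E.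
Proof.
move=> fc; apply: lime_le.
  by apply: is_cvg_nneseries => n _ _; rewrite lee_fin cabs_ge0.
by apply: nearW => N; rewrite sumEFin lee_fin.
Qed.

Lemma blaschke_weight_tails (R : realType) (a : nat -> Cx R) :
  blaschke_zeros a -> small_tails (fun n => 1 - cabs (a n) ^+ 2).
Proof.
move=> [a_lt1 a_sum].
apply: (small_tails_le (v := fun n => 1 - cabs (a n)) (c := 2)) => // [n|].
  rewrite -subr_ge0.
  have -> : 2 * (1 - cabs (a n)) - (1 - cabs (a n) ^+ 2)
            = (1 - cabs (a n)) ^+ 2 by ring.
  exact: sqr_ge0.
by apply: nneseries_small_tails a_sum => n; rewrite subr_ge0 ltW // cabs_lt1.
Qed.

Section BlaschkeTerms.
Variables (R : realType) (a : nat -> Cx R) (k l : nat).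

Lemma cabs_Aseq z n : `|a n| < 1 ->
  cabs (Aseq a k l z n) =
  (1 - cabs (a n) ^+ 2) * (cabs (1 - (a n)^* * z))^-1 ^+ (k + l + 2).
Proof.
move=> an1; apply: complexI; rewrite -normcE /Aseq conjC_1_subM.
rewrite normrM normfV normrM !normrX norm_conjC -exprD.
have -> : (k.+1 + l.+1 = k + l + 2)%N by rewrite addnS addSn addn2.
have w0 : 0 <= 1 - `|a n| ^+ 2 by rewrite subr_ge0 exprn_ile1 ?normr_ge0 ?ltW.
by rewrite ger0_norm // rmorphM rmorphB rmorph1 !rmorphXn fmorphV exprVn.
Qed.

Lemma Aseq_continuous z0 n : (a n)^* * z0 != 1 ->
  {for z0, continuous (fun z => Aseq a k l z n)}.
Proof.
move=> az0; have d1 : 1 - (a n)^* * z0 != 0 by rewrite subr_eq0 eq_sym.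
have d2 : 1 - a n * z0^* != 0 by rewrite conjC_1_subM conjC_eq0.
rewrite /Aseq; apply: cvgM; first exact: cvg_cst.
apply: cvgV; first by rewrite mulf_neq0 ?expf_neq0.
apply: cvgM; apply: cvgXn; apply: cvgB; do ?exact: cvg_cst.
  by apply: cvgM; [exact: cvg_cst | exact: cvg_id].
by apply: cvgM; [exact: cvg_cst | exact: conjC_continuous].
Qed.

End BlaschkeTerms.

Section ApproachLimit.
Variables (R : realType) (a : nat -> Cx R) (Omega : set (Cx R)) (M : R).
Variables (k l m : nat).
Hypotheses (a_zeros : blaschke_zeros a) (Omega_1 : closure Omega 1).
Hypothesis (lt_kl_2m : (k + l < 2 * m)%N).
Hypothesis Omega_bounded : forall z, Omega z ->
  (\sum_(0 <= n <oo)
     ((1 - cabs (a n) ^+ 2) / cabs (1 - (a n)^* * z) ^+ (2 * m + 2))%:E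
   <= M%:E)%E.

Lemma Aseq_cvg1 n : Aseq a k l z n @[z --> (1 : Cx R)] --> Aseq a k l 1 n.
Proof.
apply: Aseq_continuous; rewrite mulr1; apply/eqP => an1.
by have := a_zeros.1 n; rewrite -norm_conjC an1 normr1 ltxx.
Qed.

Lemma Aseq_small_tails e : 0 < e -> exists N, forall j,
  (forall z, Omega z -> \sum_(N <= n < N + j) cabs (Aseq a k l z n) <= e) /\
  \sum_(N <= n < N + j) cabs (Aseq a k l 1 n) <= e.
Proof.
move=> e0; have a_lt1 := a_zeros.1.
pose w n := 1 - cabs (a n) ^+ 2.
pose x z n := (cabs (1 - (a n)^* * z))^-1.
have w_ge0 n : 0 <= w n.
  by rewrite subr_ge0 exprn_ile1 ?cabs_ge0 // ltW // cabs_lt1.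
have bounded_q z : Omega z -> forall N,
    \sum_(0 <= n < N) w n * x z n ^+ (2 * m + 2) <= M.
  move=> Oz N; rewrite -lee_fin -sumEFin; apply: le_trans (Omega_bounded Oz).
  under eq_bigr do rewrite /x exprVn.
  apply: nneseries_lim_ge => n _ _.
  by rewrite lee_fin divr_ge0 ?exprn_ge0 ?cabs_ge0 ?w_ge0.
have x_ge0 z n : 0 <= x z n by rewrite invr_ge0 cabs_ge0.
have lt_pq : (k + l + 2 < 2 * m + 2)%N by rewrite ltn_add2r.
have [N tails] := uniform_small_tails w_ge0 x_ge0
  (blaschke_weight_tails a_zeros) lt_pq bounded_q e0.
have tail_z z : Omega z -> forall j,
    \sum_(N <= n < N + j) cabs (Aseq a k l z n) <= e.
  by move=> Oz j; under eq_bigr do rewrite cabs_Aseq //; exact: tails.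
exists N => j; split=> [z Oz|]; first exact: tail_z.
apply: (ler_closure (h := fun z => \sum_(N <= n < N + j) cabs (Aseq a k l z n))
  Omega_1) => [|z Oz]; last exact: tail_z.
by apply: cvg_sum_seq => n; apply: cvg_cabs; exact: Aseq_cvg1.
Qed.

Lemma ell1_Aseq_sub_small (e : R) : 0 < e ->
  \forall z \near within Omega (nbhs (1 : Cx R)),
    (ell1 (fun n => (Aseq a k l z n - Aseq a k l 1 n)%R) <= e%:E)%E.
Proof.
move=> e0; have e30 : 0 < e / 3 by rewrite divr_gt0.
have [N tails] := Aseq_small_tails e30.
have head : \forall z \near (1 : Cx R),
    \sum_(0 <= n < N) cabs (Aseq a k l z n - Aseq a k l 1 n) <= e / 3.
  have head_cvg : \sum_(0 <= n < N) cabs (Aseq a k l z n - Aseq a k l 1 n)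
      @[z --> (1 : Cx R)] --> 0.
    have sum0 : \sum_(0 <= n < N) cabs (Aseq a k l 1 n - Aseq a k l 1 n) = 0.
      by rewrite big1 // => n _; rewrite subrr cabs0.
    rewrite -[X in _ --> X]sum0; apply: cvg_sum_seq => n; apply: cvg_cabs.
    by apply: cvgB; [exact: Aseq_cvg1 | exact: cvg_cst].
  exact: cvgr_le head_cvg _ e30.
suff : \forall z \near (1 : Cx R), Omega z ->
  (ell1 (fun n => (Aseq a k l z n - Aseq a k l 1 n)%R) <= e%:E)%E by [].
apply: filterS head => z head_z Oz; apply: ell1_le => N'.
have [tail_z tail_1] := tails N'; have /(_ z Oz) {}tail_z := tail_z.
set d := fun n => cabs (Aseq a k l z n - Aseq a k l 1 n).
have d_ge0 n : 0 <= d n by exact: cabs_ge0.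
apply: (@le_trans _ _ (\sum_(0 <= n < N + N') d n)).
  rewrite (big_cat_nat (leq0n N') (leq_addl N N')) /= lerDl.
  by apply: sumr_ge0 => n _.
rewrite (big_cat_nat (leq0n N) (leq_addr N' N)) /=.
have tail_d : \sum_(N <= n < N + N') d n <= e / 3 + e / 3.
  apply: le_trans (lerD tail_z tail_1); rewrite -big_split /=.
  by apply: ler_sum => n _; exact: ler_cabsB.
lra.
Qed.

End ApproachLimit.

Theorem mainTheorem11 (R : realType) (a : nat -> Cx R) (Omega : set (Cx R))
  (m : nat) :
  blaschke_zeros a ->
  approach_region Omega ->
  (exists M : R, forall z, Omega z ->
     (\sum_(0 <= n <oo)
        ((1 - cabs (a n) ^+ 2) / cabs (1 - (a n)^* * z) ^+ (2 * m + 2))%:E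
      <= M%:E)%E) ->
  forall k l : nat, (k <= m)%N -> (l <= m)%N -> (k + l < 2 * m)%N ->
    (fun z => ell1 (fun n => Aseq a k l z n - Aseq a k l 1 n))
      @ within Omega (nbhs (1 : Cx R)) --> 0%E.
Proof.
move=> a_zeros [_ _ _ Omega_boundary _] [M Omega_bounded] k l _ _ lt_kl_2m.
have Omega_1 : closure Omega 1.
  have : (boundary Omega `&` unit_circle (R:=R)) 1 by rewrite Omega_boundary.
  by case=> -[].
apply: nonneg_cvge0 => [z|e e0].
  by apply: nneseries_ge0 => n _ _; rewrite lee_fin cabs_ge0.
exact: (ell1_Aseq_sub_small a_zeros Omega_1 lt_kl_2m Omega_bounded e0).
Qed.
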